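(* Let $G$ be a finite simple graph with $|G|$ vertices and let $s$ be a positive integer. Then \[ \sum_{i=1}^{|G|} \lambda_i(G)^{2s} \le \sum_{v \in V(G)} \lambda_1\bigl(B_G(v,s)\bigr)^{2s}. \]
   Context: For a graph $F$, $\lambda_1(F) \ge \lambda_2(F) \ge \cdots$ denote the eigenvalues of the adjacency matrix of $F$, listed with multiplicity. For a vertex $v$ of $G$ and integer $s \ge 0$, $B_G(v,s)$ denotes the subgraph of $G$ induced by all vertices within graph distance at most $s$ of $v$. *)

From HB Require Import structures.
From mathcomp Require Import all_boot all_order all_algebra.
Set Implicit Arguments. Unset Strict Implicit. Unset Printing Implicit Defensive.
Import Order.TTheory GRing.Theory Num.Theory.
Local Open Scope ring_scope.

Definition simple_graph (n : nat) (e : rel 'I_n) : Prop :=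
  (forall u v, e u v = e v u) /\ (forall v, ~~ e v v).

Definition induced_adj (R : nzRingType) (n : nat) (e : rel 'I_n)
  (S : {set 'I_n}) : 'M[R]_#|S| :=
  \matrix_(i < #|S|, j < #|S|) (e (enum_val i) (enum_val j))%:R.

Definition adj_mx (R : nzRingType) (n : nat) (e : rel 'I_n) : 'M[R]_n :=
  \matrix_(i < n, j < n) (e i j)%:R.

(* B_G(v,k): vertex set of all vertices at graph distance <= k from v. *)
Fixpoint ball (n : nat) (e : rel 'I_n) (v : 'I_n) (k : nat) : {set 'I_n} :=
  match k with
  | 0 => [set v]
  | k'.+1 => ball e v k' :|: [set w | [exists u in ball e v k', e u w]]
  end.

(* s is the list of eigenvalues of A, with multiplicity, in nonincreasing
   order: lambda_1 = s`_0 >= lambda_2 = s`_1 >= ... *)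
Definition is_spectrum (R : rcfType) (m : nat) (A : 'M[R]_m) (s : seq R) : Prop :=
  sorted (fun x y : R => y <= x) s /\
  char_poly A = \prod_(x <- s) ('X - x%:P).

(* Write A for the adjacency matrix of G and B_v for that of B_G(v,s). The
   left-hand side is tr A^(2s) = sum_v (A^(2s))_vv, and (A^(2s))_vv counts
   closed walks of length 2s at v; such walks never leave B_G(v,s), so
   (A^(2s))_vv = (B_v^(2s))_vv. For a symmetric nonnegative matrix every
   eigenvalue satisfies |lambda| <= lambda_1, and expanding e_v in an
   orthonormal eigenbasis of B_v gives (B_v^(2s))_vv <= lambda_1(B_v)^(2s).
   The spectral theorem is used over R[i]. *)

From mathcomp Require Import all_boot all_order all_algebra.
From mathcomp Require Import sesquilinear spectral complex zify.

Set Implicit Arguments.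
Unset Strict Implicit.
Unset Printing Implicit Defensive.

Import Order.TTheory GRing.Theory Num.Theory.
Local Open Scope ring_scope.
Local Open Scope sesquilinear_scope.

Lemma trmxX (T : comPzSemiRingType) m (A : 'M[T]_m) k : (A ^+ k)^T = A^T ^+ k.
Proof.
elim: k => [|k IHk]; first by rewrite !expr0 trmx1.
by rewrite exprS exprSr trmx_mul IHk.
Qed.

Lemma char_poly_similar (F : fieldType) m (Q P A : 'M[F]_m) :
  Q *m P = 1%:M -> char_poly (Q *m A *m P) = char_poly A.
Proof.
move=> QP; rewrite /char_poly /char_poly_mx !map_mxM.
set Qp := map_mx _ Q; set Pp := map_mx _ P; set Ap := map_mx _ A.
have QPp : Qp *m Pp = 1%:M by rewrite -map_mxM QP map_mx1.
have -> : 'X%:M - Qp *m Ap *m Pp = Qp *m ('X%:M - Ap) *m Pp.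
  rewrite mulmxBr mulmxBl; congr (_ - _).
  by rewrite -mulmxA -(scalar_mxC _ Pp) mulmxA QPp mul1mx.
by rewrite !det_mulmx mulrC mulrA -det_mulmx (mulmx1C QPp) det1 mul1r.
Qed.

Lemma sorted_ge_head (R : numDomainType) (sp : seq R) x :
  sorted (fun x y : R => y <= x) sp -> x \in sp -> x <= sp`_0.
Proof.
case: sp => [//|y sp] /= /(order_path_min (rev_trans le_trans)) /allP y_max.
by rewrite inE => /predU1P [->|/y_max].
Qed.

Section Balls.
Variables (n : nat) (e : rel 'I_n) (v : 'I_n).

Lemma subset_ball a b : (a <= b)%N -> ball e v a \subset ball e v b.
Proof.
elim: b => [|b IHb]; first by rewrite leqn0 => /eqP ->.
rewrite leq_eqVlt => /predU1P [-> //|/IHb sub_ab].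
exact: subset_trans sub_ab (subsetUl _ _).
Qed.

Lemma mem_ballS a x y : x \in ball e v a -> e x y -> y \in ball e v a.+1.
Proof.
move=> x_ball exy; rewrite /= in_setU inE; apply/orP; right.
by apply/existsP; exists x; rewrite x_ball.
Qed.

Lemma mem_ball_center a : v \in ball e v a.
Proof. by apply: subsetP (subset_ball (leq0n a)) _ _; rewrite set11. Qed.

End Balls.

Section InducedWalks.
Variables (T : comNzRingType) (n : nat) (e : rel 'I_n).
Hypothesis e_sym : symmetric e.

Lemma tr_adj_mx : (adj_mx T e)^T = adj_mx T e.
Proof. by apply/matrixP => i j; rewrite !mxE e_sym. Qed.

Lemma tr_induced_adj S : (induced_adj T e S)^T = induced_adj T e S.
Proof. by apply/matrixP => i j; rewrite !mxE e_sym. Qed.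

Lemma sum_adj_mx_induced (S : {set 'I_n}) (i : 'I_#|S|) (F : 'I_n -> T) :
  (forall z, e (enum_val i) z -> z \in S) ->
  \sum_z adj_mx T e (enum_val i) z * F z =
  \sum_l induced_adj T e S i l * F (enum_val l).
Proof.
move=> nbr_S; rewrite (bigID (mem S)) /= [X in _ + X]big1 ?addr0.
  by rewrite big_enum_val; apply: eq_bigr => l _; rewrite !mxE.
move=> z z_notin_S; rewrite mxE; case ez: (e _ z); last by rewrite mul0r.
by rewrite nbr_S in z_notin_S.
Qed.

Variables (v : 'I_n) (s : nat).
Local Notation S := (ball e v s).
Local Notation A := (adj_mx T e).
Local Notation B := (induced_adj T e S).

(* The t-th vertex of a walk of length k from ball e v a to ball e v b lies
   in ball e v (minn (a + t) (b + k - t)), hence in S when a + b + k <= 2s;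
   the induction peels off the step at the end with the smaller radius. *)
Lemma exp_adj_mx_ball k a b (i j : 'I_#|S|) :
  (a + b + k <= 2 * s)%N ->
  enum_val i \in ball e v a -> enum_val j \in ball e v b ->
  (A ^+ k) (enum_val i) (enum_val j) = (B ^+ k) i j.
Proof.
elim: k a b i j => [|k IHk] a b i j.
  by move=> *; rewrite !expr0 !mxE (inj_eq enum_val_inj).
wlog le_ab : a b i j / (a <= b)%N => [wlog_ab|].
  have [le_ab|/ltnW le_ba] := leqP a b; first exact: wlog_ab.
  move=> k_le ia jb; rewrite -[A]tr_adj_mx -[B]tr_induced_adj -!trmxX !mxE.
  by apply: (wlog_ab b a j i); rewrite // (addnC b).
move=> k_le ia jb; have lt_as : (a < s)%N by lia.
rewrite !exprS !mxE sum_adj_mx_induced => [|z /(mem_ballS ia)].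
  apply: eq_bigr => l _; rewrite mxE; case ez: (e _ _); last by rewrite !mul0r.
  by rewrite (IHk a.+1 b) ?(mem_ballS ia ez) //; lia.
exact: subsetP (subset_ball e v lt_as) z.
Qed.

End InducedWalks.

Section RowForms.
Variables (C : numClosedFieldType) (m : nat).

Lemma quad_formE (N : 'M[C]_m) (x : 'rV_m) :
  (x *m N *m x^t*) 0 0 = \sum_b \sum_a x 0 a * N a b * (x 0 b)^*.
Proof.
by rewrite mxE; apply: eq_bigr => b _; rewrite !mxE mulr_suml.
Qed.

Lemma dot_rowE (x : 'rV[C]_m) : (x *m x^t*) 0 0 = \sum_a `|x 0 a| ^+ 2.
Proof. by rewrite mxE; apply: eq_bigr => a _; rewrite !mxE normCK. Qed.

Lemma quad_form_delta (N : 'M[C]_m) v :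
  (('e_v : 'rV_m) *m N *m ('e_v : 'rV_m)^t*) 0 0 = N v v.
Proof. by rewrite trmx_delta map_delta_mx -rowE -colE !mxE. Qed.

Lemma normr_quad_form_le (N : 'M[C]_m) (x : 'rV_m) :
  (forall a b, 0 <= N a b) ->
  `|(x *m N *m x^t*) 0 0| <=
  (map_mx Num.norm x *m N *m (map_mx Num.norm x)^t*) 0 0.
Proof.
move=> N_ge0; rewrite !quad_formE; apply: le_trans (ler_norm_sum _ _ _) _.
apply: ler_sum => b _; apply: le_trans (ler_norm_sum _ _ _) _.
apply: ler_sum => a _; rewrite !mxE !normrM norm_conjC (ger0_norm (N_ge0 a b)).
by rewrite geC0_conj ?normr_ge0.
Qed.

End RowForms.

Section HermitianSpectral.
Variables (C : numClosedFieldType) (m : nat) (M : 'M[C]_m).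
Hypothesis M_herm : M^t* = M.
Local Notation P := (spectralmx M).
Local Notation d := (spectral_diag M).

Lemma spectralmx_mulmxtC : P *m P^t* = 1%:M.
Proof. exact/unitarymxP/spectral_unitarymx. Qed.

Lemma spectralmx_tCmulmx : P^t* *m P = 1%:M.
Proof. exact: mulmx1C spectralmx_mulmxtC. Qed.

Lemma hermitian_spectral_decomposition : M = P^t* *m diag_mx d *m P.
Proof.
rewrite -invmx_unitary ?spectral_unitarymx //.
by apply/orthomx_spectralP/normalmxP; rewrite M_herm.
Qed.

Lemma spectral_diag_real j : d 0 j \is Num.real.
Proof.
apply/mxOverP: j; apply: hermitian_spectral_diag_real.
by apply/is_hermitianmxP; rewrite expr0 scale1r M_herm.
Qed.

Lemma exp_spectral k : M ^+ k = P^t* *m diag_mx (\row_j d 0 j ^+ k) *m P.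
Proof.
elim: k => [|k IHk].
  rewrite expr0 (_ : \row_j _ = const_mx 1); last first.
    by apply/rowP => j; rewrite !mxE.
  by rewrite diag_const_mx mulmx1 spectralmx_tCmulmx.
rewrite exprS -mulmxE IHk {1}hermitian_spectral_decomposition !mulmxA.
rewrite -[_ *m P *m P^t*]mulmxA spectralmx_mulmxtC mulmx1.
rewrite -(mulmxA (P^t*)) mulmx_diag.
by congr (_ *m diag_mx _ *m _); apply/rowP => j; rewrite !mxE exprS.
Qed.

Lemma mxtrace_exp_spectral k : \tr (M ^+ k) = \sum_j d 0 j ^+ k.
Proof.
rewrite exp_spectral mxtrace_mulC mulmxA spectralmx_mulmxtC mul1mx mxtrace_diag.
by apply: eq_bigr => j _; rewrite mxE.
Qed.

Lemma char_poly_hermitian : char_poly M = \prod_j ('X - (d 0 j)%:P).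
Proof.
rewrite {1}hermitian_spectral_decomposition.
rewrite char_poly_similar ?spectralmx_tCmulmx //.
rewrite char_poly_trig ?diag_mx_is_trig //.
by apply: eq_bigr => j _; rewrite mxE eqxx mulr1n.
Qed.

Lemma quad_form_exp (x : 'rV[C]_m) k :
  (x *m M ^+ k *m x^t*) 0 0 = \sum_j d 0 j ^+ k * `|(x *m P^t*) 0 j| ^+ 2.
Proof.
rewrite exp_spectral !mulmxA -[x *m _ *m _ *m P *m _]mulmxA.
rewrite -[P *m x^t*]trmxCK.
rewrite trmx_mul map_mxM trmxCK mxE; apply: eq_bigr => j _.
by rewrite mul_mx_diag !mxE normCK mulrCA mulrA.
Qed.

Lemma quad_form_norm (x : 'rV[C]_m) :
  \sum_j `|(x *m P^t*) 0 j| ^+ 2 = (x *m x^t*) 0 0.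
Proof.
have := quad_form_exp x 0; rewrite expr0 mulmx1 => ->.
by apply: eq_bigr => j _; rewrite expr0 mul1r.
Qed.

Hypothesis M_ge0 : forall a b, 0 <= M a b.
Variable mu : C.
Hypothesis spectral_diag_le : forall j, d 0 j <= mu.

Lemma quad_form_le (x : 'rV[C]_m) :
  (x *m M *m x^t*) 0 0 <= mu * (x *m x^t*) 0 0.
Proof.
rewrite -[M]expr1 quad_form_exp -quad_form_norm mulr_sumr.
apply: ler_sum => j _; rewrite expr1.
by apply: ler_wpM2r; [exact: exprn_ge0 | exact: spectral_diag_le].
Qed.

(* The Rayleigh quotient of the unit eigenvector x := row j P is d_j, and
   replacing x by |x| can only increase it since M is entrywise nonnegative. *)
Lemma normr_spectral_diag_le j : `|d 0 j| <= mu.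
Proof.
pose x := row j P.
have quad_x k : (x *m M ^+ k *m x^t*) 0 0 = d 0 j ^+ k.
  rewrite quad_form_exp /x -row_mul spectralmx_mulmxtC row1 (bigD1 j) //=.
  rewrite big1 => [|i ij].
    by rewrite !mxE !eqxx normr1 expr1n mulr1 addr0.
  by rewrite !mxE (negbTE ij) normr0 expr0n mulr0.
have x_unit : (x *m x^t*) 0 0 = 1 by have := quad_x 0; rewrite !expr0 mulmx1.
have normr_x :
    (map_mx Num.norm x *m (map_mx Num.norm x)^t*) 0 0 = (x *m x^t*) 0 0.
  by rewrite !dot_rowE; apply: eq_bigr => a _; rewrite mxE normr_id.
have := quad_x 1; rewrite !expr1 => <-.
apply: le_trans (normr_quad_form_le x M_ge0) _.
by apply: le_trans (quad_form_le _) _; rewrite normr_x x_unit mulr1.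
Qed.

Lemma diag_exp_le v k : (M ^+ (2 * k)) v v <= mu ^+ (2 * k).
Proof.
have mu_ge0 : 0 <= mu.
  by apply: le_trans (normr_ge0 _) (normr_spectral_diag_le v).
have e_unit : (('e_v : 'rV[C]_m) *m ('e_v : 'rV_m)^t*) 0 0 = 1.
  have := quad_form_delta (1%:M : 'M[C]_m) v.
  by rewrite mulmx1 => ->; rewrite mxE eqxx.
rewrite -quad_form_delta quad_form_exp -[X in _ <= X]mulr1 -e_unit.
rewrite -quad_form_norm mulr_sumr.
apply: ler_sum => j _; apply: ler_wpM2r; first exact: exprn_ge0.
rewrite exprM -real_normK ?spectral_diag_real // -exprM.
by apply: lerXn2r; rewrite ?nnegrE ?normr_ge0 // normr_spectral_diag_le.
Qed.

End HermitianSpectral.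

Section RealSymmetricSpectrum.
Variables (R : rcfType) (m : nat) (M : 'M[R]_m) (sp : seq R).
Hypothesis M_sym : M^T = M.
Hypothesis char_M : char_poly M = \prod_(x <- sp) ('X - x%:P).
Local Notation toC := (real_complex R).
Local Notation Mc := (map_mx toC M).

Lemma hermitian_map_real_complex : Mc^t* = Mc.
Proof.
apply/matrixP => i j; rewrite !mxE conj_Creal ?complex_real //.
by rewrite -[M in LHS]M_sym mxE.
Qed.

Lemma size_spectrum : size sp = m.
Proof. by have := size_char_poly M; rewrite char_M size_prod_XsubC => -[]. Qed.

Lemma perm_spectral_diag_map_real_complex :
  perm_eq [seq spectral_diag Mc 0 j | j <- index_enum 'I_m] (map toC sp).
Proof.
apply: prod_XsubC_eq; rewrite !big_map.
rewrite -char_poly_hermitian ?hermitian_map_real_complex //.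
by rewrite -map_char_poly char_M map_prod_XsubC.
Qed.

Lemma spectral_diag_map_real_complex j :
  exists2 x, x \in sp & spectral_diag Mc 0 j = toC x.
Proof.
have : spectral_diag Mc 0 j \in map toC sp.
  rewrite -(perm_mem perm_spectral_diag_map_real_complex).
  exact/map_f/mem_index_enum.
by case/mapP => x; exists x.
Qed.

Lemma sum_exp_spectrum k : \sum_(i < m) sp`_i ^+ k = \tr (M ^+ k).
Proof.
apply: (fmorph_inj toC); rewrite -trace_map_mx rmorphXn.
rewrite mxtrace_exp_spectral ?hermitian_map_real_complex //.
rewrite -(big_map (fun j => spectral_diag Mc 0 j) predT (fun x => x ^+ k)).
rewrite (perm_big _ perm_spectral_diag_map_real_complex) big_map rmorph_sum.
rewrite (big_nth 0) size_spectrum big_mkord.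
by apply: eq_bigr => i _; rewrite rmorphXn.
Qed.

Lemma diag_exp_le_spectrum_head v k :
  (forall a b, 0 <= M a b) -> sorted (fun x y : R => y <= x) sp ->
  (M ^+ (2 * k)) v v <= sp`_0 ^+ (2 * k).
Proof.
move=> M_ge0 sorted_sp; rewrite -lecR rmorphXn.
have -> : toC ((M ^+ (2 * k)) v v) = (Mc ^+ (2 * k)) v v.
  by rewrite -rmorphXn mxE.
apply: diag_exp_le; first exact: hermitian_map_real_complex.
  by move=> a b; rewrite mxE ler0c.
move=> j; have [x x_sp ->] := spectral_diag_map_real_complex j.
by rewrite lecR sorted_ge_head.
Qed.

End RealSymmetricSpectrum.

Unset Implicit Arguments.

Theorem lemma7 (R : rcfType) (n : nat) (e : rel 'I_n) (s : nat)
  (hG : simple_graph e) (hs : (0 < s)%N)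
  (specG : seq R) (hspecG : is_spectrum (adj_mx R e) specG)
  (specB : 'I_n -> seq R)
  (hspecB : forall v, is_spectrum (induced_adj R e (ball e v s)) (specB v)) :
  \sum_(i < n) specG`_i ^+ (2 * s) <= \sum_(v < n) (specB v)`_0 ^+ (2 * s).
Proof.
have [e_sym _] := hG; have [_ char_A] := hspecG.
rewrite (sum_exp_spectrum (tr_adj_mx _ e_sym) char_A); apply: ler_sum => v _.
have v_ball := mem_ball_center e v s.
have iv : enum_val (enum_rank_in v_ball v) = v := enum_rankK_in v_ball v_ball.
rewrite -{1 2}iv (exp_adj_mx_ball _ e_sym (a := 0) (b := 0))
  ?iv ?mem_ball_center //.
have [sorted_B char_B] := hspecB v.
apply: (diag_exp_le_spectrum_head (tr_induced_adj _ e_sym _) char_B) sorted_B.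
by move=> a b; rewrite mxE ler0n.
Qed.
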